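(* Let $S$ be a set of $n\ge3$ points in the plane with the $L_1$-metric as underlying metric. The minimum, over all axis-aligned highway crosses of infinite speed, of the travel-time diameter of $S$ equals the width of a smallest enclosing cross of $S$.
   Context: An axis-aligned highway cross is the union $H$ of a horizontal line and a vertical line. One travels with speed $1$ off $H$ (distances in the $L_1$-metric $d$) and with infinite speed along $H$; hence the travel time is $t_H(p,q)=\min\{d(p,q),\, d(p,H)+d(q,H)\}$, where $d(x,H)$ is the $L_1$-distance from $x$ to $H$. The travel-time diameter of $S$ is $\max_{p,q\in S}t_H(p,q)$. An enclosing cross of $S$ is the union of a horizontal strip and a vertical strip of equal width $\omega$ (a strip being the closed region between two parallel lines, its width the distance between them) whose union contains $S$; $\omega$ is its width. A smallest enclosing cross is one of minimum width. *)

From HB Require Import structures.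
From mathcomp Require Import all_boot all_order all_algebra.
From mathcomp Require Import reals.
Set Implicit Arguments. Unset Strict Implicit. Unset Printing Implicit Defensive.
Import Order.TTheory GRing.Theory Num.Theory.
Local Open Scope ring_scope.

Section Defs.
Variable R : realType.
Definition pt := (R * R)%type.

Definition d1 (p q : pt) : R := `|p.1 - q.1| + `|p.2 - q.2|.

(* The highway cross H = {x = v} ∪ {y = h}; L1-distance from p to H. *)
Definition distH (v h : R) (p : pt) : R := Num.min `|p.1 - v| `|p.2 - h|.

Definition tH (v h : R) (p q : pt) : R :=
  Num.min (d1 p q) (distH v h p + distH v h q).

(* travel-time diameter of S w.r.t. the cross (v,h): max over pairs
   (all values are >= 0, so 0 as neutral element is harmless for nonempty S) *)
Definition diamH (v h : R) (S : seq pt) : R :=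
  \big[Num.max/0]_(p <- S) \big[Num.max/0]_(q <- S) tH v h p q.

Definition enclosing_cross (S : seq pt) (w : R) : Prop :=
  0 <= w /\ exists a c : R, forall p, p \in S ->
    (a <= p.1 <= a + w) \/ (c <= p.2 <= c + w).
End Defs.

From HB Require Import structures.
From mathcomp Require Import all_boot all_order all_algebra.
From mathcomp Require Import reals.
From mathcomp Require Import lra.
From Stdlib Require Import Classical.
Import Order.TTheory GRing.Theory Num.Theory.
Local Open Scope ring_scope.

(* Let D be the travel-time diameter for a cross H and p a point of S farthest
   from H, at distance r.  Every q in S lies within r of H and reaches p in
   time at most D; on the line of H nearest to q this confines the matching
   coordinate of q to the window of length D that ends at distance r from the
   line on p's side.  Hence S has an enclosing cross of width D.  Conversely,
   the cross through the middle lines of an enclosing cross of width w keeps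
   every point within w/2 of it, so its diameter is at most w.  A smallest
   enclosing cross exists because every enclosing cross shrinks to one whose
   width is one of the finitely many coordinate differences of points of S. *)

Lemma exists_argmin_seq {disp : Order.disp_t} {U : orderType disp} {T : eqType}
    (F : T -> U) {P : T -> Prop} {s : seq T} :
  (exists2 x, x \in s & P x) ->
  exists2 x, x \in s /\ P x & forall y, y \in s -> P y -> (F x <= F y)%O.
Proof.
elim: s => [[x //]|x s IH] exPs.
have [[y ys Py]|noPs] := classic (exists2 y, y \in s & P y).
  have [m [ms Pm] minm] := IH (ex_intro2 _ _ y ys Py).
  have [[Px ltxm]|notx] := classic (P x /\ (F x < F m)%O).
    exists x; first by rewrite mem_head.
    move=> z; rewrite inE => /predU1P[-> //|zs Pz].
    exact: le_trans (ltW ltxm) (minm z zs Pz).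
  exists m; first by rewrite inE ms orbT.
  move=> z; rewrite inE => /predU1P[-> Px|]; last exact: minm.
  by rewrite leNgt; apply/negP => ltxm; apply: notx.
have notin z : z \in s -> ~ P z by move=> zs Pz; apply: noPs; exists z.
have Px : P x by case: exPs => z; rewrite inE => /predU1P[-> //|/notin].
exists x; first by rewrite mem_head.
by move=> z; rewrite inE => /predU1P[-> //|/notin].
Qed.

Section HighwayCross.
Context {R : realType}.
Implicit Types (S : seq (pt R)) (v h w : R).

Lemma diamH_ge0 v h S : 0 <= diamH v h S.
Proof. exact: bigmax_ge_id. Qed.

Lemma tH_le_diamH v h S p q : p \in S -> q \in S -> tH v h p q <= diamH v h S.
Proof.
move=> pS qS; apply: (bigmax_sup_seq _ _ _ _ _ pS) => //.
exact: (bigmax_sup_seq _ _ _ _ _ qS).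
Qed.

Lemma window_around_line (c x0 r D : R) : r <= `|x0 - c| ->
  exists lo, forall x, `|x - c| <= r -> `|x0 - x| <= D \/ r + `|x - c| <= D ->
    lo <= x <= lo + D.
Proof.
move=> far.
exists (if c <= x0 then c + r - D else c - r) => x near reach.
have {reach} : x0 - D <= x <= x0 + D \/ c - (D - r) <= x <= c + (D - r).
  case: reach => reach; [left; rewrite -ler_distlC | right] => //.
  by rewrite -ler_distl lerBrDl.
move: near; rewrite ler_distl => /andP[? ?].
case: ifPn => [cx0|]; [rewrite ger0_norm ?subr_ge0 // in far|].
- by case=> /andP[? ?]; apply/andP; split; lra.
- rewrite -ltNge => x0c; rewrite ltr0_norm ?subr_lt0 // in far.
  by case=> /andP[? ?]; apply/andP; split; lra.
Qed.

Lemma enclosing_cross_diamH v h S : enclosing_cross S (diamH v h S).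
Proof.
case: S => [|p0 s]; first by split; [exact: diamH_ge0 | exists 0, 0].
set S := p0 :: s; set D := diamH v h S.
have [p [pS _] farthest] := exists_argmin_seq (fun q => - distH v h q)
  (ex_intro2 (fun q => q \in S) (fun _ => True) p0 (mem_head p0 s) I).
set r := distH v h p.
have near q : q \in S -> distH v h q <= r.
  by move=> qS; rewrite -lerN2; apply: farthest.
have /andP[far1 far2] : (r <= `|p.1 - v|) && (r <= `|p.2 - h|) by rewrite -le_min.
have [lo1 window1] := @window_around_line v p.1 r D far1.
have [lo2 window2] := @window_around_line h p.2 r D far2.
split; first exact: diamH_ge0.
exists lo1, lo2 => q qS.
have /orP reach : (d1 p q <= D) || (r + distH v h q <= D).
  by rewrite -ge_min; apply: tH_le_diamH.
have [le1 le2] : `|p.1 - q.1| <= d1 p q /\ `|p.2 - q.2| <= d1 p q.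
  by rewrite /d1 lerDl lerDr !normr_ge0.
have [dq|dq] : distH v h q = `|q.1 - v| \/ distH v h q = `|q.2 - h|.
  by rewrite /distH minEle; case: ifP; [left | right].
- left; apply: window1; first by rewrite -dq near.
  by case: reach => [/(le_trans le1)|]; [left | rewrite dq; right].
- right; apply: window2; first by rewrite -dq near.
  by case: reach => [/(le_trans le2)|]; [left | rewrite dq; right].
Qed.

Lemma diamH_center_le S w a c : 0 <= w ->
  (forall p, p \in S -> (a <= p.1 <= a + w) \/ (c <= p.2 <= c + w)) ->
  diamH (a + w / 2) (c + w / 2) S <= w.
Proof.
move=> w0 cover.
have half p : p \in S -> distH (a + w / 2) (c + w / 2) p <= w / 2.
  move=> /cover[] /andP[? ?]; rewrite /distH ge_min;
    apply/orP; [left | right]; rewrite ler_distl; apply/andP; split; lra.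
rewrite /diamH big_seq; apply: bigmax_le => // p pS.
rewrite big_seq; apply: bigmax_le => // q qS.
rewrite /tH ge_min; apply/orP; right.
by have := half p pS; have := half q qS; lra.
Qed.

Definition cross_widths S : seq R :=
  [seq p.1 - q.1 | p <- S, q <- S] ++ [seq p.2 - q.2 | p <- S, q <- S].

Lemma spread_in_window {T : eqType} (f : T -> R) (Q : pred T) {s : seq T} {d lo w} :
  d \in s -> 0 <= w -> (forall x, x \in s -> Q x -> lo <= f x <= lo + w) ->
  exists x0 x1, [/\ x0 \in s, x1 \in s, f x0 <= f x1, f x1 - f x0 <= w &
    forall x, x \in s -> Q x -> f x0 <= f x <= f x1].
Proof.
move=> ds w0 window.
have [/hasP[y ys Qy]|/hasPn noQ] := boolP (has Q s); last first.
  by exists d, d; split; rewrite ?subrr // => x xs Qx; move: (noQ x xs); rewrite Qx.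
have exQ : exists2 x, x \in s & Q x by exists y.
have [x0 [x0s Qx0] lowest] := exists_argmin_seq f exQ.
have [x1 [x1s Qx1] highest] := exists_argmin_seq (fun x => - f x) exQ.
have spanned x : x \in s -> Q x -> f x0 <= f x <= f x1.
  by move=> xs Qx; rewrite lowest //= -lerN2 highest.
exists x0, x1; split => //; first by have /andP[] := spanned x1 x1s Qx1.
by have /andP[? ?] := window _ x0s Qx0; have /andP[? ?] := window _ x1s Qx1; lra.
Qed.

Lemma enclosing_cross_shrink {S w} : S != [::] -> enclosing_cross S w ->
  exists2 w', w' \in cross_widths S & w' <= w /\ enclosing_cross S w'.
Proof.
case: S => [//|d s] _ [w0 [a [c cover]]]; set S := d :: s.
pose vertical (p : pt R) := a <= p.1 <= a + w.
have [x0 [x1 [x0S x1S lex wx spanx]]] :=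
  spread_in_window (fun p => p.1) vertical (mem_head d s) w0 (fun p _ Vp => Vp).
have horizontal p : p \in S -> ~~ vertical p -> c <= p.2 <= c + w.
  by move=> pS /negP notV; case: (cover p pS) => // /notV.
have [y0 [y1 [y0S y1S _ wy spany]]] :=
  spread_in_window (fun p => p.2) (predC vertical) (mem_head d s) w0 horizontal.
set w' := Num.max (x1.1 - x0.1) (y1.2 - y0.2).
have [wx' wy'] : x1.1 - x0.1 <= w' /\ y1.2 - y0.2 <= w' by rewrite !le_max !lexx orbT.
exists w'.
  rewrite /w' maxEle mem_cat; case: ifP => _; apply/orP; [right | left].
    exact: (allpairs_f (fun p q : pt R => p.2 - q.2)).
  exact: (allpairs_f (fun p q : pt R => p.1 - q.1)).
split; first by rewrite ge_max wx wy.
split; first by apply: le_trans wx'; rewrite subr_ge0.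
exists x0.1, y0.2 => p pS; case: (boolP (vertical p)) => Vp.
  by left; have /andP[? ?] := spanx p pS Vp; apply/andP; split; lra.
by right; have /andP[? ?] := spany p pS Vp; apply/andP; split; lra.
Qed.

Lemma exists_min_enclosing_cross {S} : S != [::] ->
  exists m, enclosing_cross S m /\ forall w, enclosing_cross S w -> m <= w.
Proof.
move=> S0.
have [w0 w0W [_ enc0]] := enclosing_cross_shrink S0 (enclosing_cross_diamH 0 0 S).
have [m [mW encm] minm] := exists_argmin_seq id (ex_intro2 _ _ w0 w0W enc0).
exists m; split => // w /(enclosing_cross_shrink S0)[w' w'W [le_w'w encw']].
exact: le_trans (minm w' w'W encw') le_w'w.
Qed.

End HighwayCross.

Theorem lemma2 (R : realType) (S : seq (R * R)) :
  uniq S -> (3 <= size S)%N ->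
  exists m : R,
    (exists v h : R, diamH v h S = m /\ forall v' h' : R, m <= diamH v' h' S) /\
    (enclosing_cross S m /\ forall w : R, enclosing_cross S w -> m <= w).
Proof.
move=> _ size_ge3.
have S0 : S != [::] by case: S size_ge3.
have [m [encm minm]] := exists_min_enclosing_cross S0.
have [m0 [a [c cover]]] := encm.
exists m; split=> //.
exists (a + m / 2), (c + m / 2); split.
  apply/le_anti/andP; split; first exact: diamH_center_le.
  exact/minm/enclosing_cross_diamH.
by move=> v' h'; apply/minm/enclosing_cross_diamH.
Qed.
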